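(* For $m=1,\dots,N$ let $\mathcal{E}^{(m)}=\{\sigma^{(m)}_i,q^{(m)}_i\}_{i=1}^{k_m}$ be an ensemble of states on a finite-dimensional space $\mathcal H_m$, and let $\{\Pi^{(m)}_i\}_{i=1}^{k_m}$ be a POVM attaining the optimal minimum-error success probability for $\mathcal E^{(m)}$. Then the product POVM $\{\Pi^{(1)}_{i_1}\otimes\cdots\otimes\Pi^{(N)}_{i_N}\}$ attains the optimal minimum-error success probability for the product ensemble $\{\sigma^{(1)}_{i_1}\otimes\cdots\otimes\sigma^{(N)}_{i_N},\,q^{(1)}_{i_1}\cdots q^{(N)}_{i_N}\}$ on $\mathcal H_1\otimes\cdots\otimes\mathcal H_N$. Consequently the product ensemble can be optimally distinguished by $N$-party LOCC (each party $m$ measuring $\{\Pi^{(m)}_i\}$ locally).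
   Context: For an ensemble $\{\rho_i,p_i\}$, the success probability of a POVM $\{\Pi_i\}$ is $\sum_ip_i\,\mathrm{tr}(\Pi_i\rho_i)$; the optimal minimum-error success probability is its maximum over all POVMs with the same index set. Party $m$ holds system $\mathcal H_m$. *)

From HB Require Import structures.
From mathcomp Require Import all_boot all_order all_algebra all_field.
Set Implicit Arguments. Unset Strict Implicit. Unset Printing Implicit Defensive.
Import Order.TTheory GRing.Theory Num.Theory.
Local Open Scope ring_scope.

(* Operators on the Hilbert space C^T, T a finite type (a finite orthonormal
   basis), written as their matrices in that basis. *)
Definition op (T : finType) := T -> T -> algC.

Definition psd (T : finType) (A : op T) : Prop :=
  forall v : T -> algC, 0 <= \sum_(x : T) \sum_(y : T) (v x)^* * A x y * v y.

Definition trace (T : finType) (A : op T) : algC := \sum_(x : T) A x x.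

Definition mulop (T : finType) (A B : op T) : op T :=
  fun x y => \sum_(z : T) A x z * B z y.

Definition is_state (T : finType) (A : op T) : Prop := psd A /\ trace A = 1.

Definition is_ensemble (I T : finType) (rho : I -> op T) (p : I -> algC) : Prop :=
  (forall i, is_state (rho i)) /\ (forall i, 0 <= p i) /\ \sum_(i : I) p i = 1.

Definition is_povm (I T : finType) (Pi : I -> op T) : Prop :=
  (forall i, psd (Pi i)) /\
  (forall x y : T, \sum_(i : I) Pi i x y = (x == y)%:R).

Definition success (I T : finType) (rho : I -> op T) (p : I -> algC)
  (Pi : I -> op T) : algC :=
  \sum_(i : I) p i * trace (mulop (Pi i) (rho i)).

Definition optimal_povm (I T : finType) (rho : I -> op T) (p : I -> algC)
  (Pi : I -> op T) : Prop :=
  is_povm Pi /\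
  forall Pi' : I -> op T, is_povm Pi' -> success rho p Pi' <= success rho p Pi.

(* N parties; party m has space C^(d m) and ensemble index set 'I_(k m). *)
Definition prodspace (N : nat) (d : 'I_N -> nat) : finType :=
  {dffun forall m : 'I_N, 'I_(d m)}.

Definition tensop (N : nat) (d : 'I_N -> nat)
  (A : forall m : 'I_N, op 'I_(d m)) : op (prodspace d) :=
  fun x y => \prod_(m : 'I_N) A m (x m) (y m).

From HB Require Import structures.
From mathcomp Require Import all_boot all_order all_algebra all_field.
From mathcomp Require Import ring spectral.
Set Implicit Arguments. Unset Strict Implicit. Unset Printing Implicit Defensive.
Import Order.TTheory GRing.Theory Num.Theory.
Local Open Scope ring_scope.

(* The proof goes through the Holevo / Yuen-Kennedy-Lax optimality condition.
   For an ensemble {s_j, q_j} and a POVM {Pi_j} let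
     Y = 1/2 sum_j q_j (Pi_j s_j + s_j Pi_j)      (the Lagrange operator),
   so that tr Y is the success probability of Pi.  If Pi is optimal then
   Y - q_l s_l is positive semidefinite for every l: otherwise a rank-one
   perturbation Pi'_j = S Pi_j S + [j = l] e u u^*, S = 1 - c u u^*, would be
   a better POVM for small c > 0 (first-order argument).

   For the product problem take Y = Y_1 (x) ... (x) Y_N.  Its trace is the
   product of the optimal values, i.e. the success probability of the product
   POVM.  Since Y_m >= q_{i_m} s_{i_m} >= 0 for every factor, the tensor
   product satisfies Y >= (x)_m q_{i_m} s_{i_m} when tested against any psd
   operator, and summing tr(Pi'_i Y) over a competing POVM Pi' bounds its
   success probability by tr Y. *)

Lemma prod_sum_dffun (I : finType) (T_ : I -> finType)
    (F : forall i, T_ i -> algC) :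
  \prod_(i : I) \sum_(j : T_ i) F i j =
  \sum_(f : {dffun forall i, T_ i}) \prod_(i : I) F i (f i).
Proof.
transitivity (\sum_(t : fprod T_) \prod_(i in I) [ffun j => F i j] (t i)).
  rewrite (@big_fprod algC 0 1 *%R +%R I T_ (fun i => [ffun j => F i j])).
  rewrite -(bigA_distr_big_dep _ (fun i j => untag 0 [ffun j => F i j] j)).
  apply: eq_bigr => i _.
  rewrite -(@big_tag algC 0 +%R I T_ (fun i => [ffun j => F i j]) i).
  by apply: eq_bigr => j _; rewrite ffunE.
rewrite (reindex (@dffun_of_fprod I T_)); last first.
  by apply: onW_bij; exact: dffun_of_fprod_bij.
by apply: eq_bigr => t _; apply: eq_bigr => i _; rewrite !ffunE.
Qed.

Lemma sum_delta (T : finType) (x : T) (f : T -> algC) :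
  \sum_(s : T) (s == x)%:R * f s = f x.
Proof.
rewrite (bigD1 x) //= eqxx mul1r big1 ?addr0 // => s /negbTE ->.
by rewrite mul0r.
Qed.

Definition qform (T : finType) (A : op T) (v : T -> algC) : algC :=
  \sum_(x : T) \sum_(y : T) (v x)^* * A x y * v y.

Definition rank_one_sum (T K : finType) (w : K -> T -> algC) (A : op T) :=
  forall x y, A x y = \sum_(k : K) w k x * (w k y)^*.

(* <v, A v> = sum_k |<v, w_k>|^2 >= 0. *)
Lemma rank_one_sum_psd (T K : finType) (w : K -> T -> algC) (A : op T) :
  rank_one_sum w A -> psd A.
Proof.
move=> hA v.
have term k : \sum_(x : T) \sum_(y : T) (v x)^* * (w k x * (w k y)^*) * v y
    = (\sum_(x : T) (v x)^* * w k x) * (\sum_(x : T) (v x)^* * w k x)^*.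
  rewrite rmorph_sum big_distrlr /=; apply: eq_bigr => x _.
  by apply: eq_bigr => y _; rewrite rmorphM /= conjCK; ring.
under eq_bigr do under eq_bigr do rewrite hA mulr_sumr mulr_suml.
under eq_bigr do rewrite exchange_big.
rewrite exchange_big /=; apply: sumr_ge0 => k _.
by rewrite term mul_conjC_ge0.
Qed.

(* tr(P A) = sum_k <w_k, P w_k> >= 0 when A = sum_k w_k w_k^*. *)
Lemma trace_mul_rank_one_sum (T K : finType) (w : K -> T -> algC) (P A : op T) :
  psd P -> rank_one_sum w A -> 0 <= trace (mulop P A).
Proof.
move=> hP hA; rewrite /trace /mulop.
under eq_bigr do under eq_bigr do rewrite hA mulr_sumr.
under eq_bigr do rewrite exchange_big.
rewrite exchange_big /=; apply: sumr_ge0 => k _.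
have -> : \sum_(x : T) \sum_(z : T) P x z * (w k z * (w k x)^*)
   = \sum_(x : T) \sum_(y : T) (w k x)^* * P x y * w k y.
  by apply: eq_bigr => x _; apply: eq_bigr => y _; ring.
exact: hP.
Qed.

Lemma rank_one_sum_tensop (N : nat) (d : 'I_N -> nat) (K : 'I_N -> finType)
    (w : forall m, K m -> 'I_(d m) -> algC) (A : forall m : 'I_N, op 'I_(d m)) :
  (forall m, rank_one_sum (w m) (A m)) ->
  rank_one_sum (fun (kk : {dffun forall m, K m}) (x : prodspace d) =>
                  \prod_(m : 'I_N) w m (kk m) (x m)) (tensop A).
Proof.
move=> hA x y; rewrite /tensop.
under eq_bigr do rewrite hA.
rewrite prod_sum_dffun; apply: eq_bigr => kk _.
by rewrite rmorph_prod big_split.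
Qed.

Lemma qform_pair (T : finType) (A : op T) (x y : T) (a b : algC) :
  qform A (fun s => a * (s == x)%:R + b * (s == y)%:R) =
  a^* * a * A x x + a^* * b * A x y + b^* * a * A y x + b^* * b * A y y.
Proof.
have conj_v s : (a * (s == x)%:R + b * (s == y)%:R)^* =
    (s == x)%:R * a^* + (s == y)%:R * b^*.
  by rewrite rmorphD !rmorphM /= !conjC_nat; ring.
have delta2 (F : T -> T -> algC) (x' y' : T) :
    \sum_(i : T) \sum_(j : T) (i == x')%:R * ((j == y')%:R * F i j) = F x' y'.
  under eq_bigr do rewrite -mulr_sumr sum_delta.
  exact: (sum_delta x' (fun i => F i y')).
transitivity (\sum_(i : T) \sum_(j : T)
     ((i == x)%:R * ((j == x)%:R * (a^* * a * A i j))
    + (i == x)%:R * ((j == y)%:R * (a^* * b * A i j))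
    + (i == y)%:R * ((j == x)%:R * (b^* * a * A i j))
    + (i == y)%:R * ((j == y)%:R * (b^* * b * A i j)))).
  by apply: eq_bigr => i _; apply: eq_bigr => j _; rewrite conj_v; ring.
under eq_bigr do rewrite !big_split /=.
by rewrite !big_split /= !delta2.
Qed.

(* Polarization: a psd operator is hermitian.  With a = A x y and b = A y x,
   the forms at e_x + e_y and e_x + i e_y show that a + b and i (a - b) are
   real, which forces b = a^*. *)
Lemma psd_hermitian (T : finType) (A : op T) :
  psd A -> forall x y, A y x = (A x y)^*.
Proof.
move=> hA x y.
have form_real x' y' a b :
    qform A (fun s => a * (s == x')%:R + b * (s == y')%:R) \is Num.real.
  exact/ger0_real/hA.
have diag_real z : A z z \is Num.real.
  have := form_real z z 1 0.
  by rewrite qform_pair rmorph1 rmorph0 !mul1r !mul0r !addr0.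
have sum_real : A x y + A y x \is Num.real.
  have := form_real x y 1 1; rewrite qform_pair rmorph1 !mul1r.
  have -> : A x x + A x y + A y x + A y y = (A x y + A y x) + (A x x + A y y).
    by ring.
  by rewrite rpredDr // rpredD.
have dif_real : 'i * (A x y - A y x) \is Num.real.
  have := form_real x y 1 'i; rewrite qform_pair rmorph1 !mul1r conjCi.
  have -> : A x x + 'i * A x y + - 'i * 1 * A y x + - 'i * 'i * A y y =
      'i * (A x y - A y x) + (A x x - 'i ^+ 2 * A y y) by ring.
  by rewrite sqrCi rpredDr // mulN1r opprK rpredD.
have conj_sum := CrealP sum_real; have conj_dif := CrealP dif_real.
rewrite rmorphD /= in conj_sum.
rewrite rmorphM rmorphB /= conjCi in conj_dif.
have conj_dif' : (A x y)^* - (A y x)^* = A y x - A x y.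
  apply: (mulfI (neq0Ci algC)); rewrite -[LHS]opprK -mulNr conj_dif; ring.
have two : (2%:R : algC) != 0 by rewrite pnatr_eq0.
apply: (mulfI two).
transitivity ((A x y + A y x) + (A y x - A x y)); first ring.
by rewrite -conj_sum -conj_dif'; ring.
Qed.

Lemma psd_scale (T : finType) (c : algC) (A : op T) :
  0 <= c -> psd A -> psd (fun x y => c * A x y).
Proof.
move=> c_ge0 hA v.
have -> : \sum_x \sum_y (v x)^* * (c * A x y) * v y =
    c * \sum_x \sum_y (v x)^* * A x y * v y.
  rewrite mulr_sumr; apply: eq_bigr => x _; rewrite mulr_sumr.
  by apply: eq_bigr => y _; ring.
exact: mulr_ge0 (hA v).
Qed.

Lemma trace_povm_sum (I T : finType) (Pi : I -> op T) (X : op T) :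
  is_povm Pi -> \sum_(i : I) trace (mulop (Pi i) X) = trace X.
Proof.
move=> [_ Pi_sum]; rewrite /trace /mulop exchange_big /=; apply: eq_bigr => x _.
rewrite exchange_big /=.
under eq_bigr do rewrite -mulr_suml Pi_sum eq_sym.
exact: (sum_delta x (fun z => X z x)).
Qed.

Definition mx (n : nat) (A : op 'I_n) : 'M[algC]_n := \matrix_(i, j) A i j.

Lemma mx_fun (n : nat) (M : 'M[algC]_n) : mx (fun x y => M x y) = M.
Proof. by apply/matrixP => i j; rewrite mxE. Qed.

Lemma mx_mulop (n : nat) (A B : op 'I_n) : mx (mulop A B) = mx A *m mx B.
Proof.
by apply/matrixP => i j; rewrite !mxE; apply: eq_bigr => z _; rewrite !mxE.
Qed.

Lemma trace_mx (n : nat) (A : op 'I_n) : trace A = \tr (mx A).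
Proof. by apply: eq_bigr => i _; rewrite mxE. Qed.

Definition adj (m n : nat) (M : 'M[algC]_(m, n)) : 'M[algC]_(n, m) :=
  (M ^t*)%sesqui.

Lemma adjE (m n : nat) (M : 'M[algC]_(m, n)) i j : adj M i j = (M j i)^*.
Proof. by rewrite /adj !mxE. Qed.

Lemma adjM (m n p : nat) (A : 'M[algC]_(m, n)) (B : 'M[algC]_(n, p)) :
  adj (A *m B) = adj B *m adj A.
Proof. by rewrite /adj trmx_mul map_mxM. Qed.

Lemma adjK (m n : nat) (M : 'M[algC]_(m, n)) : adj (adj M) = M.
Proof. by apply/matrixP => i j; rewrite !adjE conjCK. Qed.

Definition cvec (n : nat) (v : 'I_n -> algC) : 'cV[algC]_n := \col_i v i.

Lemma qform_mx (n : nat) (A : op 'I_n) (v : 'I_n -> algC) :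
  qform A v = (adj (cvec v) *m mx A *m cvec v) 0 0.
Proof.
rewrite /qform !mxE exchange_big /=; apply: eq_bigr => y _.
rewrite !mxE mulr_suml; apply: eq_bigr => x _.
by rewrite /adj !mxE.
Qed.

Lemma qform_cvec (n : nat) (A : op 'I_n) (u : 'cV[algC]_n) :
  (adj u *m mx A *m u) 0 0 = qform A (fun i => u i 0).
Proof.
by rewrite qform_mx; congr ((adj _ *m _ *m _) 0 0); apply/colP => i; rewrite mxE.
Qed.

(* Spectral theorem: a psd operator A = U^* D U is the sum of the rank-one
   operators w_j w_j^* with w_j = sqrt(D_j) (row j of U)^*. *)
Definition sqrt_family (n : nat) (A : op 'I_n) : 'I_n -> 'I_n -> algC :=
  fun j x => sqrtC (spectral_diag (mx A) 0 j) * ((spectralmx (mx A)) j x)^*.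

Lemma psd_rank_one_sum (n : nat) (A : op 'I_n) :
  psd A -> rank_one_sum (sqrt_family A) A.
Proof.
move=> hA.
have normalA : mx A \is normalmx.
  have hermA : (mx A ^t*)%sesqui = mx A.
    by apply/matrixP => i j; rewrite !mxE; exact/esym/psd_hermitian.
  by apply/normalmxP; rewrite hermA.
have /orthomx_spectralP eA := normalA.
rewrite invmx_unitary ?spectral_unitarymx // in eA.
have hU := unitarymxP (spectral_unitarymx (mx A)).
rewrite /sqrt_family.
set U := spectralmx (mx A) in eA hU *.
set D := spectral_diag (mx A) in eA *.
have eD : diag_mx D = U *m mx A *m (U ^t*)%sesqui.
  by rewrite {1}eA !mulmxA hU mul1mx -mulmxA hU mulmx1.
have D_ge0 j : 0 <= D 0 j.
  have := congr1 (fun M : 'M_n => M j j) eD; rewrite /= mxE eqxx mulr1n => ->.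
  have -> : (U *m mx A *m (U ^t*)%sesqui) j j = qform A (fun y => (U j y)^*).
    rewrite mxE /qform exchange_big /=; apply: eq_bigr => y _.
    rewrite !mxE mulr_suml; apply: eq_bigr => x _.
    by rewrite !mxE conjCK.
  exact: hA.
move=> x y.
have := congr1 (fun M : 'M_n => M x y) eA; rewrite /= !mxE => ->.
apply: eq_bigr => j _.
rewrite mul_mx_diag !mxE rmorphM /= conjCK.
rewrite [(sqrtC _)^*]geC0_conj ?sqrtC_ge0 //.
rewrite -[in LHS](sqrtCK (D 0 j)) expr2; ring.
Qed.

Lemma psd_tensop_rank_one_sum (N : nat) (d : 'I_N -> nat)
    (A : forall m : 'I_N, op 'I_(d m)) :
  (forall m, psd (A m)) ->
  rank_one_sum (fun (kk : {dffun forall m, 'I_(d m)}) (x : prodspace d) =>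
                  \prod_(m : 'I_N) sqrt_family (A m) (kk m) (x m)) (tensop A).
Proof.
move=> hA; apply: (@rank_one_sum_tensop N d _ (fun m => sqrt_family (A m))).
by move=> m; apply: psd_rank_one_sum.
Qed.

Lemma psd_tensop (N : nat) (d : 'I_N -> nat) (A : forall m : 'I_N, op 'I_(d m)) :
  (forall m, psd (A m)) -> psd (tensop A).
Proof. by move=> hA; apply/rank_one_sum_psd/psd_tensop_rank_one_sum. Qed.

Lemma trace_mul_psd_tensop (N : nat) (d : 'I_N -> nat) (P : op (prodspace d))
    (A : forall m : 'I_N, op 'I_(d m)) :
  psd P -> (forall m, psd (A m)) -> 0 <= trace (mulop P (tensop A)).
Proof.
by move=> hP hA; apply/(trace_mul_rank_one_sum hP)/psd_tensop_rank_one_sum.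
Qed.

(* The coefficients of p(c) = c u + c^2 w are recovered from p(b) and p(b/2),
   so they are real when these two values are (b real, nonzero). *)
Lemma quadratic_coef_real (u w b : algC) : b \is Num.real -> b != 0 ->
  b * u + b ^+ 2 * w \is Num.real ->
  (b / 2) * u + (b / 2) ^+ 2 * w \is Num.real ->
  (u \is Num.real) && (w \is Num.real).
Proof.
move=> rb bn0 r1 r2; apply/andP; split.
  have -> : u = (4%:R * ((b / 2) * u + (b / 2) ^+ 2 * w)
                 - (b * u + b ^+ 2 * w)) / b by field.
  by rewrite rpredM ?rpredV // rpredB // rpredM // realn.
have -> : w = 2%:R * ((b * u + b ^+ 2 * w)
               - 2%:R * ((b / 2) * u + (b / 2) ^+ 2 * w)) / b ^+ 2 by field.
by rewrite rpredM ?rpredV ?rpredX // rpredM ?realn // rpredB // rpredM ?realn.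
Qed.

(* First-order condition at 0: if c u + c^2 w <= 0 for all small c > 0, then
   u <= 0.  Otherwise u > 0, and the choice c = b u / (u - b w) (or c = b
   when w >= 0) makes the quadratic positive. *)
Lemma small_quadratic_nonpos (u w b : algC) : 0 < b ->
  (forall c, 0 < c -> c <= b -> c * u + c ^+ 2 * w <= 0) -> u <= 0.
Proof.
move=> b_gt0 small_le0.
have b2_gt0 : 0 < b / 2 by rewrite divr_gt0 // ltr0n.
have b2_le : b / 2 <= b by rewrite ler_pdivrMr ?ltr0n // ler_pMr // ler1n.
have Hb := small_le0 b b_gt0 (lexx b).
have rb := gtr0_real b_gt0.
have /andP [ru rw] : (u \is Num.real) && (w \is Num.real).
  apply: (quadratic_coef_real rb (lt0r_neq0 b_gt0)).
    exact: ler0_real Hb.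
  exact: ler0_real (small_le0 _ b2_gt0 b2_le).
rewrite real_leNgt ?real0 //; apply/negP => u_gt0.
have [w_ge0|w_lt0] := real_leP (real0 _) rw.
  move: Hb; apply/negP; rewrite -real_ltNge ?real0 ?rpredD ?rpredM ?rpredX //.
  apply: (lt_le_trans (y := b * u)); first by rewrite mulr_gt0.
  by rewrite lerDl mulr_ge0 // exprn_ge0 // ltW.
set d := u - b * w.
have d_gt0 : 0 < d.
  rewrite /d subr_gt0; apply: (le_lt_trans (y := 0)) => //.
  by rewrite pmulr_rle0 // ltW.
set c := b * u / d.
have c_gt0 : 0 < c by rewrite divr_gt0 // mulr_gt0.
have c_le : c <= b.
  rewrite ler_pdivrMr // ler_pM2l // /d lerDl oppr_ge0 pmulr_rle0 //.
  exact: ltW.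
have := small_le0 c c_gt0 c_le.
have -> : c * u + c ^+ 2 * w = b * u ^+ 3 / d ^+ 2.
  have ew : w = (u - d) / b by rewrite /d; field; rewrite gt_eqF.
  rewrite /c; clearbody d; rewrite ew; field.
  by rewrite !gt_eqF.
apply/negP; rewrite -real_ltNge ?real0 ?rpredM ?rpredV ?rpredX ?gtr0_real //.
by rewrite divr_gt0 ?exprn_gt0 // mulr_gt0 // exprn_gt0.
Qed.

Lemma rank_one_sqr (n : nat) (u : 'cV[algC]_n) :
  (u *m adj u) *m (u *m adj u) = \tr (u *m adj u) *: (u *m adj u).
Proof.
rewrite mulmxA -(mulmxA u) [adj u *m u]mx11_scalar mul_mx_scalar -scalemxAl.
by rewrite mxtrace_mulC trace_mx11.
Qed.

Lemma perturb_sqr (n : nat) (P : 'M[algC]_n) (a c : algC) : P *m P = a *: P ->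
  (1%:M - c *: P) *m (1%:M - c *: P) = 1%:M - (2%:R * c - c ^+ 2 * a) *: P.
Proof.
move=> hP; rewrite mulmxBl mul1mx mulmxBr mulmx1 -scalemxAl -scalemxAr hP.
by apply/matrixP => i j; rewrite !mxE; ring.
Qed.

Lemma adj_perturb (n : nat) (u : 'cV[algC]_n) (c : algC) : c \is Num.real ->
  adj (1%:M - c *: (u *m adj u)) = 1%:M - c *: (u *m adj u).
Proof.
move=> rc; apply/matrixP => i j.
rewrite adjE !mxE rmorphB rmorphM /= (CrealP rc) conjC_nat eq_sym !big_ord1.
by rewrite !adjE rmorphM /= conjCK [_ * u i _]mulrC.
Qed.

Lemma trace_perturb (n : nat) (P A B : 'M[algC]_n) (c t : algC) :
  \tr (((1%:M - c *: P) *m A *m (1%:M - c *: P) + t *: P) *m B) =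
  \tr (A *m B) - c * (\tr (P *m A *m B) + \tr (A *m P *m B))
  + c ^+ 2 * \tr (P *m A *m P *m B) + t * \tr (P *m B).
Proof.
have -> : (1%:M - c *: P) *m A *m (1%:M - c *: P) =
    A - c *: (P *m A) - c *: (A *m P) + (c * c) *: (P *m A *m P).
  rewrite mulmxBl mul1mx -scalemxAl mulmxBr mulmx1 -scalemxAr mulmxBl.
  rewrite -scalemxAl; move: (P *m A) (A *m P) (P *m A *m P) => X Y Z.
  by apply/matrixP => i j; rewrite !mxE; ring.
rewrite !mulmxDl !mulNmx -!scalemxAl !mxtraceD !raddfN /= !mxtraceZ.
ring.
Qed.

Section OptimalityCondition.
Variables (n k : nat) (sigma : 'I_k -> op 'I_n) (q : 'I_k -> algC)
  (Pi : 'I_k -> op 'I_n).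

Lemma success_mx (Pi' : 'I_k -> op 'I_n) :
  success sigma q Pi' = \sum_(j : 'I_k) q j * \tr (mx (Pi' j) *m mx (sigma j)).
Proof. by apply: eq_bigr => j _; rewrite trace_mx mx_mulop. Qed.

Definition lagrange_op : op 'I_n := fun x y =>
  (\sum_(j : 'I_k) q j * (mulop (Pi j) (sigma j) x y
                          + mulop (sigma j) (Pi j) x y)) / 2%:R.

Lemma mx_lagrange_op : mx lagrange_op =
  2%:R^-1 *: \sum_(j : 'I_k) q j *:
    (mx (Pi j) *m mx (sigma j) + mx (sigma j) *m mx (Pi j)).
Proof.
apply/matrixP => x y; rewrite !mxE summxE mulrC; congr (_ * _).
apply: eq_bigr => j _; rewrite !mxE /mulop.
by congr (_ * (_ + _)); apply: eq_bigr => z _; rewrite !mxE.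
Qed.

Lemma trace_lagrange_op : trace lagrange_op = success sigma q Pi.
Proof.
rewrite trace_mx success_mx mx_lagrange_op mxtraceZ raddf_sum /= mulr_sumr.
apply: eq_bigr => j _.
by rewrite mxtraceZ mxtraceD [\tr (mx (sigma j) *m _)]mxtrace_mulC; field.
Qed.

Variables (u : 'cV[algC]_n) (l : 'I_k).

Definition perturb_scale (c : algC) : algC :=
  2%:R * c - c ^+ 2 * \tr (u *m adj u).

Definition perturb (c : algC) : 'I_k -> op 'I_n := fun j x y =>
  ((1%:M - c *: (u *m adj u)) *m mx (Pi j) *m (1%:M - c *: (u *m adj u))
   + ((j == l)%:R * perturb_scale c) *: (u *m adj u)) x y.

Lemma perturb_povm (c : algC) : is_povm Pi -> 0 <= c ->
  c * \tr (u *m adj u) <= 2%:R -> is_povm (perturb c).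
Proof.
move=> [Pi_psd Pi_sum] c_ge0 ca_le2.
have e_ge0 : 0 <= perturb_scale c.
  have -> : perturb_scale c = c * (2%:R - c * \tr (u *m adj u)).
    by rewrite /perturb_scale; ring.
  by rewrite mulr_ge0 // subr_ge0.
set S := 1%:M - c *: (u *m adj u).
split=> [j w | x y].
  change (0 <= qform (perturb c j) w).
  rewrite qform_mx /perturb -/S mx_fun mulmxDr mulmxDl mxE; apply: addr_ge0.
    have -> : adj (cvec w) *m (S *m mx (Pi j) *m S) *m cvec w =
              adj (S *m cvec w) *m mx (Pi j) *m (S *m cvec w).
      by rewrite adjM /S adj_perturb ?ger0_real // !mulmxA.
    by rewrite qform_cvec; apply: Pi_psd.
  rewrite -scalemxAr -scalemxAl mxE; apply: mulr_ge0.
    by rewrite mulr_ge0 //; case: (j == l).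
  rewrite (mulmxA (adj (cvec w)) u) -(mulmxA _ (adj u)).
  rewrite -[adj u *m cvec w]adjK adjM adjK.
  by rewrite mxE big_ord1 adjE mul_conjC_ge0.
have sumPi : \sum_(j : 'I_k) mx (Pi j) = 1%:M.
  apply/matrixP => i j; rewrite summxE !mxE.
  by under eq_bigr do rewrite mxE; apply: Pi_sum.
rewrite /perturb -/S -summxE big_split /= -mulmx_suml -mulmx_sumr -scaler_suml.
rewrite (sum_delta l (fun _ => perturb_scale c)) sumPi mulmx1.
by rewrite /S (perturb_sqr _ (rank_one_sqr u)) subrK mxE.
Qed.

(* The first- and second-order coefficients of the success probability of
   the perturbed POVM. *)
Definition first_order : algC :=
  \sum_(j : 'I_k) q j * (\tr (u *m adj u *m mx (Pi j) *m mx (sigma j))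
                       + \tr (mx (Pi j) *m (u *m adj u) *m mx (sigma j))).

Definition second_order : algC :=
  \sum_(j : 'I_k) q j *
    \tr (u *m adj u *m mx (Pi j) *m (u *m adj u) *m mx (sigma j)).

Definition weight_l : algC := q l * \tr (u *m adj u *m mx (sigma l)).

Lemma success_perturb (c : algC) :
  success sigma q (perturb c) = success sigma q Pi - c * first_order
    + c ^+ 2 * second_order + perturb_scale c * weight_l.
Proof.
rewrite !success_mx /first_order /second_order /weight_l.
under eq_bigr do rewrite /perturb mx_fun trace_perturb.
transitivity (\sum_(j : 'I_k) (q j * \tr (mx (Pi j) *m mx (sigma j))
  + (- c) * (q j * (\tr (u *m adj u *m mx (Pi j) *m mx (sigma j))
                    + \tr (mx (Pi j) *m (u *m adj u) *m mx (sigma j))))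
  + c ^+ 2 * (q j * \tr (u *m adj u *m mx (Pi j) *m (u *m adj u)
                         *m mx (sigma j)))
  + (j == l)%:R * (perturb_scale c
                   * (q j * \tr (u *m adj u *m mx (sigma j)))))).
  by apply: eq_bigr => j _; ring.
by rewrite !big_split /= -!mulr_sumr sum_delta; ring.
Qed.

Lemma qform_lagrange_sub :
  qform (fun x y => lagrange_op x y - q l * sigma l x y) (fun i => u i 0) =
  first_order / 2%:R - weight_l.
Proof.
rewrite -qform_cvec -trace_mx11 -mxtrace_mulC mulmxA.
have -> : mx (fun x y => lagrange_op x y - q l * sigma l x y) =
    mx lagrange_op - q l *: mx (sigma l).
  by apply/matrixP => x y; rewrite !mxE.
rewrite mx_lagrange_op mulmxBr -!scalemxAr raddfB /= !mxtraceZ.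
rewrite mulmx_sumr raddf_sum /= [first_order / _]mulrC /first_order /weight_l.
congr (_ * _ - _); apply: eq_bigr => j _.
rewrite -scalemxAr mxtraceZ mulmxDr mxtraceD !mulmxA.
by rewrite [\tr (u *m adj u *m mx (sigma j) *m _)]mxtrace_mulC !mulmxA.
Qed.

End OptimalityCondition.

(* For any vector u,
   optimality against the perturbed POVMs gives c (2 weight - first) +
   c^2 (second - tr(P) weight) <= 0 for small c > 0, hence
   first / 2 - weight = <u, (Y - q_l s_l) u> >= 0. *)
Theorem lagrange_op_dominates (n k : nat) (sigma : 'I_k -> op 'I_n)
    (q : 'I_k -> algC) (Pi : 'I_k -> op 'I_n) :
  optimal_povm sigma q Pi ->
  forall l, psd (fun x y => lagrange_op sigma q Pi x y - q l * sigma l x y).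
Proof.
move=> [povm opt] l v.
change (0 <= qform (fun x y => lagrange_op sigma q Pi x y - q l * sigma l x y) v).
set u := cvec v; rewrite qform_mx -/u qform_cvec qform_lagrange_sub.
set a := \tr (u *m adj u).
have a_ge0 : 0 <= a.
  rewrite /a mxtrace_mulC trace_mx11 mxE; apply: sumr_ge0 => x _.
  by rewrite adjE mulrC mul_conjC_ge0.
have a1_gt0 : 0 < a + 1 by rewrite ltr_wpDl.
suff : 2%:R * weight_l sigma q u l - first_order sigma q Pi u <= 0.
  by move=> h; rewrite subr_ge0 ler_pdivlMr ?ltr0n // mulrC -subr_le0.
apply: (small_quadratic_nonpos (w := second_order sigma q Pi u
          - a * weight_l sigma q u l) (b := (a + 1)^-1)); first by rewrite invr_gt0.
move=> c c_gt0 c_le.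
have ca_le1 : c * a <= 1.
  apply: (le_trans (y := (a + 1)^-1 * a)); first exact: ler_wpM2r.
  by rewrite mulrC -/(_ / _) ler_pdivrMr // mul1r lerDl.
have ca_le2 : c * a <= 2%:R by rewrite (le_trans ca_le1) // ler1n.
have := opt _ (perturb_povm l povm (ltW c_gt0) ca_le2).
rewrite success_perturb /perturb_scale -/a -subr_ge0.
by rewrite -oppr_le0; congr (_ <= 0); ring.
Qed.

Section Tensor.
Variables (N : nat) (d : 'I_N -> nat).

Lemma trace_tensop (A : forall m : 'I_N, op 'I_(d m)) :
  trace (tensop A) = \prod_(m : 'I_N) trace (A m).
Proof. by rewrite /trace /tensop (prod_sum_dffun (fun m j => A m j j)). Qed.

Lemma trace_mulop_tensop (A B : forall m : 'I_N, op 'I_(d m)) :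
  trace (mulop (tensop A) (tensop B)) =
  \prod_(m : 'I_N) trace (mulop (A m) (B m)).
Proof.
rewrite /trace /mulop /tensop.
rewrite (prod_sum_dffun (fun m j => \sum_z A m j z * B m z j)).
apply: eq_bigr => x _.
rewrite (prod_sum_dffun (fun m z => A m (x m) z * B m z (x m))).
by apply: eq_bigr => z _; rewrite big_split.
Qed.

(* Expanding prod_m A_m = prod_m ((A_m - B_m) + B_m): the difference of two
   tensor products is a sum of mixed tensor products, one for each nonempty
   set f of factors taken from A - B. *)
Definition mixed_factor (A B : forall m : 'I_N, op 'I_(d m))
    (f : {ffun 'I_N -> bool}) (m : 'I_N) : op 'I_(d m) :=
  if f m then (fun x y => A m x y - B m x y) else B m.

Lemma tensop_sub (A B : forall m : 'I_N, op 'I_(d m)) (x y : prodspace d) :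
  tensop A x y - tensop B x y =
  \sum_(f | f != [ffun => false]) tensop (mixed_factor A B f) x y.
Proof.
have expand : tensop A x y =
    \sum_(f : {ffun 'I_N -> bool}) tensop (mixed_factor A B f) x y.
  transitivity (\prod_(m : 'I_N) \sum_(b : bool)
      (if b then A m (x m) (y m) - B m (x m) (y m) else B m (x m) (y m))).
    by apply: eq_bigr => m _; rewrite big_bool /= subrK.
  rewrite bigA_distr_bigA; apply: eq_bigr => f _; apply: eq_bigr => m _.
  by rewrite /mixed_factor; case: (f m).
have vanish : tensop (mixed_factor A B [ffun => false]) x y = tensop B x y.
  by apply: eq_bigr => m _; rewrite /mixed_factor ffunE.
by rewrite expand (bigD1 [ffun => false]) //= vanish addrC addrK.
Qed.

Lemma trace_mulop_tensop_le (P : op (prodspace d))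
    (A B : forall m : 'I_N, op 'I_(d m)) :
  psd P -> (forall m, psd (fun x y => A m x y - B m x y)) ->
  (forall m, psd (B m)) ->
  trace (mulop P (tensop B)) <= trace (mulop P (tensop A)).
Proof.
move=> hP hAB hB; rewrite -subr_ge0.
have -> : trace (mulop P (tensop A)) - trace (mulop P (tensop B)) =
    \sum_(f | f != [ffun => false]) trace (mulop P (tensop (mixed_factor A B f))).
  rewrite /trace /mulop -sumrB exchange_big /=; apply: eq_bigr => x _.
  rewrite -sumrB exchange_big /=; apply: eq_bigr => z _.
  by rewrite -mulrBr tensop_sub mulr_sumr.
apply: sumr_ge0 => f _; apply: trace_mul_psd_tensop => // m.
by rewrite /mixed_factor; case: (f m).
Qed.

Lemma tensop_povm (k : 'I_N -> nat) (Pi : forall m : 'I_N, 'I_(k m) -> op 'I_(d m)) :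
  (forall m, is_povm (Pi m)) ->
  is_povm (fun i : {dffun forall m : 'I_N, 'I_(k m)} =>
             tensop (fun m => Pi m (i m))).
Proof.
move=> hPi; split=> [i | x y].
  by apply: psd_tensop => m; case: (hPi m).
rewrite /tensop -(prod_sum_dffun (fun m j => Pi m j (x m) (y m))).
under eq_bigr => m _ do case: (hPi m) => _ ->.
have [->|nxy] := eqVneq x y; first by rewrite big1 // => m _; rewrite eqxx.
have [m hm] : exists m, x m != y m.
  apply/existsP; apply: contraNT nxy; rewrite negb_exists => /forallP h.
  by apply/eqP/ffunP => m; apply/eqP; move: (h m); rewrite negbK.
by rewrite (bigD1 m) //= (negbTE hm) mul0r.
Qed.

Lemma success_tensop (k : 'I_N -> nat)
    (sigma Pi : forall m : 'I_N, 'I_(k m) -> op 'I_(d m))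
    (q : forall m : 'I_N, 'I_(k m) -> algC) :
  success (fun i : {dffun forall m : 'I_N, 'I_(k m)} =>
             tensop (fun m => sigma m (i m)))
          (fun i : {dffun forall m : 'I_N, 'I_(k m)} => \prod_(m : 'I_N) q m (i m))
          (fun i : {dffun forall m : 'I_N, 'I_(k m)} => tensop (fun m => Pi m (i m)))
  = \prod_(m : 'I_N) success (sigma m) (q m) (Pi m).
Proof.
rewrite /success (prod_sum_dffun (fun m j => q m j * trace (mulop (Pi m j) (sigma m j)))).
by apply: eq_bigr => i _; rewrite trace_mulop_tensop big_split.
Qed.

Lemma trace_mulop_tensop_scale (P : op (prodspace d))
    (c : 'I_N -> algC) (A : forall m : 'I_N, op 'I_(d m)) :
  (\prod_(m : 'I_N) c m) * trace (mulop P (tensop A)) =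
  trace (mulop P (tensop (fun m x y => c m * A m x y))).
Proof.
rewrite /trace /mulop mulr_sumr; apply: eq_bigr => x _; rewrite mulr_sumr.
by apply: eq_bigr => z _; rewrite /tensop big_split /=; ring.
Qed.

End Tensor.

Theorem mainTheorem15 (N : nat) (d k : 'I_N -> nat)
  (sigma : forall m : 'I_N, 'I_(k m) -> op 'I_(d m))
  (q : forall m : 'I_N, 'I_(k m) -> algC)
  (Pi : forall m : 'I_N, 'I_(k m) -> op 'I_(d m)) :
  (forall m, is_ensemble (sigma m) (q m)) ->
  (forall m, optimal_povm (sigma m) (q m) (Pi m)) ->
  optimal_povm
    (fun i : {dffun forall m : 'I_N, 'I_(k m)} =>
       tensop (fun m => sigma m (i m)))
    (fun i : {dffun forall m : 'I_N, 'I_(k m)} => \prod_(m : 'I_N) q m (i m))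
    (fun i : {dffun forall m : 'I_N, 'I_(k m)} =>
       tensop (fun m => Pi m (i m))).
Proof.
move=> hens hopt; split; first by apply: tensop_povm => m; case: (hopt m).
move=> Pi' povm'; rewrite success_tensop.
pose Y m := lagrange_op (sigma m) (q m) (Pi m).
(* The optimum is the trace of Y_1 (x) ... (x) Y_N ... *)
have -> : \prod_(m : 'I_N) success (sigma m) (q m) (Pi m) = trace (tensop Y).
  by rewrite trace_tensop; apply: eq_bigr => m _; rewrite trace_lagrange_op.
(* ... which dominates every term of the success probability of Pi'. *)
rewrite -(trace_povm_sum _ povm'); apply: ler_sum => i _.
rewrite trace_mulop_tensop_scale; apply: trace_mulop_tensop_le => [|m|m].
- by case: povm'.
- exact: lagrange_op_dominates.
- case: (hens m) => [states [q_ge0 _]].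
  by apply: psd_scale => //; case: (states (i m)).
Qed.
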